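(* Fix $\delta>0$. For $\pi\in\{\texttt{G-HCLA},\texttt{GP-HCLA}\}$, the set $\mathcal B=\{t\ge1:|U(G(t);\hat\mu(t))-U(G(t);\mu)|\ge\delta\}$ satisfies $\mathbb E[|\mathcal B|]\le 4MK+\frac{2M^3K}{\delta^2}$.
   Context: Model: $M$ agents, $K>M$ arms; pair $(m,k)$ has a Bernoulli distribution of mean $\mu_{m,k}\in[0,1]$. Each round each agent pulls an arm (assignment $G(t)$ of arms $k^G_m$ to agents, a ''matching''; $\mathcal G$ the set of assignments); an agent receives an independent Bernoulli sample of its arm if no other agent pulls that arm, else $0$. Each agent may also query one arm per round as a hint, observing an independent sample. $U(G;w)=\sum_m w_{m,k^G_m}\mathbb 1\{\forall m'\ne m:k^G_{m'}\ne k^G_m\}$; $G^*=\arg\max U(G;\mu)$ unique. $\mathrm{kl}$ is the Bernoulli KL divergence, $f(t)=\log t+4\log\log t$. Covering matchings $R_i$ ($i\le K$) match agent $m$ to arm $((m+i-2)\bmod K)+1$, $\mathcal R=\{R_i\}$. $\texttt{Hungarian}(w)$ returns an assignment of agents to distinct arms maximizing $\sum_m w_{m,k^G_m}$. Both algorithms are centralized and maintain per edge $N_{m,k}(t)$ (number of observations of $(m,k)$ from pulls and hints before $t$), their empirical mean $\hat\mu_{m,k}(t)$, and $d_{m,k}(t)=\sup\{q\ge0:N_{m,k}(t)\mathrm{kl}(\hat\mu_{m,k}(t),q)\le f(t)\}$ (initialized to $0$). At round $t$: $G(t)=\texttt{Hungarian}(\hat\mu(t))$, $G'(t)=\texttt{Hungarian}(d(t))$;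 if $U(G'(t);d(t))>U(G(t);\hat\mu(t))$ a hint matching $G^{\mathrm{hint}}(t)$ is chosen and each agent queries its arm in it; then agents pull per $G(t)$ and update. In $\texttt{GP-HCLA}$, $G^{\mathrm{hint}}(t)$ is, w.p. $1/2$ each, either the $R\in\mathcal R$ containing an edge of $G'(t)$ with minimal $N_{m,k}(t)$, or a uniformly random element of $\mathcal R$. In $\texttt{G-HCLA}$, $G^{\mathrm{hint}}(t)$ is, w.p. $1/2$ each, either $G'(t)$ or a uniformly random element of $\mathcal R$. *)

From HB Require Import structures.
From mathcomp Require Import all_boot all_order all_algebra.
From mathcomp Require Import all_classical all_reals all_analysis.
Set Implicit Arguments. Unset Strict Implicit. Unset Printing Implicit Defensive.
Import Order.TTheory GRing.Theory Num.Theory.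
Local Open Scope classical_set_scope.
Local Open Scope ring_scope.

Section Model.
Variables (R : realType) (M K : nat).

(* An assignment G of arms to agents (element of \mathcal G). Agents and
   arms are 0-indexed: agent m in 'I_M, arm k in 'I_K. *)
Definition assignment := {ffun 'I_M -> 'I_K}.

Definition U (G : assignment) (w : 'I_M -> 'I_K -> R) : R :=
  \sum_(m < M)
    (if [forall m' : 'I_M, (m' != m) ==> (G m' != G m)] then w m (G m) else 0).

Definition unique_optimum (mu : 'I_M -> 'I_K -> R) : Prop :=
  exists Gs : assignment, forall G : assignment, G != Gs -> U G mu < U Gs mu.

Definition hungarian_spec (hung : ('I_M -> 'I_K -> R) -> assignment) : Prop :=
  forall w, injectiveb (fun m => hung w m) /\
    forall G : assignment, injectiveb (fun m => G m) ->
      \sum_(m < M) w m (G m) <= \sum_(m < M) w m (hung w m).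

(* Bernoulli KL divergence, with the usual conventions 0 log 0 = 0 and
   +oo when the second argument is 0 or 1 and differs from the first. *)
Definition klB (p q : R) : \bar R :=
  let t1 : \bar R := if p == 0 then 0%E else if q == 0 then +oo%E
                     else (p * ln (p / q))%:E in
  let t2 : \bar R := if p == 1 then 0%E else if q == 1 then +oo%E
                     else ((1 - p) * ln ((1 - p) / (1 - q)))%:E in
  (t1 + t2)%E.

Definition fexp (t : nat) : R := ln (t%:R) + 4 * ln (ln (t%:R)).

Definition muhat (N S : 'I_M -> 'I_K -> nat) (m : 'I_M) (k : 'I_K) : R :=
  if N m k == 0%N then 0 else (S m k)%:R / (N m k)%:R.

Definition dind (N S : 'I_M -> 'I_K -> nat) (t : nat) (m : 'I_M) (k : 'I_K) : R :=
  if N m k == 0%N then 0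
  else sup [set q : R | 0 <= q <= 1 /\
                   ((N m k)%:R%:E * klB (muhat N S m k) q <= (fexp t)%:E)%E].

(* Covering matchings: R_i matches agent m to arm (m + i) mod K
   (0-indexed version of ((m+i-2) mod K) + 1). *)
Lemma ord_pos (i : 'I_K) : (0 < K)%N.
Proof. exact: leq_ltn_trans (leq0n i) (ltn_ord i). Qed.

Definition cov (i : 'I_K) : assignment :=
  [ffun m : 'I_M => Ordinal (ltn_pmod (m + i) (ord_pos i))].

(* index of the covering matching containing edge (m,k) (valid when M <= K) *)
Definition cov_idx (m : 'I_M) (k : 'I_K) : 'I_K :=
  Ordinal (ltn_pmod (k + (K - m)) (ord_pos k)).

Definition sel_spec
  (sel : ('I_M -> 'I_K -> nat) -> assignment -> 'I_M) : Prop :=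
  forall N G m, (N (sel N G) (G (sel N G)) <= N m (G m))%N.

Section Algo.
(* gp = true : GP-HCLA ; gp = false : G-HCLA *)
Variables (gp : bool) (hung : ('I_M -> 'I_K -> R) -> assignment)
  (sel : ('I_M -> 'I_K -> nat) -> assignment -> 'I_M).
(* Randomness (realized): X m k j = j-th observation (0-indexed) of edge (m,k);
   coin t = fair coin of round t; unif t = uniform index in 'I_K of round t. *)
Variables (X : 'I_M -> 'I_K -> nat -> bool) (coin : nat -> bool)
  (unif : nat -> 'I_K).

Definition state := (('I_M -> 'I_K -> nat) * ('I_M -> 'I_K -> nat))%type.

Definition hint_matching (N : 'I_M -> 'I_K -> nat) (G' : assignment)
  (c : bool) (u : 'I_K) : assignment :=
  if c then (if gp then cov (cov_idx (sel N G') (G' (sel N G'))) else G')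
  else cov u.

Definition step (t : nat) (st : state) : state :=
  let N := st.1 in let S := st.2 in
  let mh := muhat N S in
  let d := dind N S t in
  let G := hung mh in
  let G' := hung d in
  let hint := U G' d > U G mh in
  let H := hint_matching N G' (coin t) (unif t) in
  let N1 := fun m k => (N m k + (hint && (H m == k)))%N in
  let S1 := fun m k => (S m k + [&& hint, H m == k & X m k (N m k)])%N in
  let N2 := fun m k => (N1 m k + (G m == k))%N in
  let S2 := fun m k => (S1 m k + ((G m == k) && X m k (N1 m k)))%N in
  (N2, S2).

(* state_before n = (N(n+1), S(n+1)), the state at the start of round n+1 *)
Fixpoint state_before (n : nat) : state :=
  match n with
  | 0%N => (fun _ _ => 0%N, fun _ _ => 0%N)
  | n'.+1 => step n'.+1 (state_before n')
  end.

End Algo.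

Definition state_at gp hung sel X coin unif (t : nat) : state :=
  state_before gp hung sel X coin unif t.-1.

Definition inB (mu : 'I_M -> 'I_K -> R) (delta : R) gp hung sel X coin unif
  (t : nat) : bool :=
  let st := state_at gp hung sel X coin unif t in
  let mh := muhat st.1 st.2 in
  let G := hung mh in
  delta <= `|U G mh - U G mu|.

Definition cardB mu delta gp hung sel X coin unif : \bar R :=
  (\sum_(1 <= t <oo) ((inB mu delta gp hung sel X coin unif t)%:R : R)%:E)%E.

(* Joint law of the randomness: all X m k j, coin t, unif t are mutually
   independent, X m k j ~ Bernoulli(mu m k), coin t ~ Bernoulli(1/2),
   unif t ~ Uniform('I_K). Stated as the factorization of the joint pmf on
   every finite family of distinct variables. *)
Definition randomness_law (d : measure_display) (T : measurableType d)
  (P : probability T R) (mu : 'I_M -> 'I_K -> R)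
  (X : 'I_M -> 'I_K -> nat -> T -> bool) (coin : nat -> T -> bool)
  (unif : nat -> T -> 'I_K) : Prop :=
  [/\ (forall m k j b, measurable [set w : T | X m k j w = b]),
      (forall t b, measurable [set w : T | coin t w = b]),
      (forall t i, measurable [set w : T | unif t w = i]) &
      forall (s1 : seq ('I_M * 'I_K * nat)) (s2 s3 : seq nat)
             (b1 : 'I_M * 'I_K * nat -> bool) (b2 : nat -> bool)
             (u3 : nat -> 'I_K),
        uniq s1 -> uniq s2 -> uniq s3 ->
        P [set w : T | [&& all (fun e => X e.1.1 e.1.2 e.2 w == b1 e) s1,
                       all (fun t => coin t w == b2 t) s2 &
                       all (fun t => unif t w == u3 t) s3]]
        = ((\prod_(e <- s1) (if b1 e then mu e.1.1 e.1.2
                             else 1 - mu e.1.1 e.1.2))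
           * (2^-1) ^+ size s2 * (K%:R^-1) ^+ size s3)%:E].

End Model.

From HB Require Import structures.
From mathcomp Require Import all_boot all_order all_algebra.
From mathcomp Require Import all_classical all_reals all_analysis.
From mathcomp Require Import measurable_realfun lebesgue_measure.
From mathcomp Require Import ring lra.
Import Order.TTheory GRing.Theory Num.Theory.
Local Open Scope ring_scope.
Set Implicit Arguments. Unset Strict Implicit.

(* A round t lies in B only if some agent m has |muhat_{m,k} - mu_{m,k}| >= delta/M
   on its own edge k = G(t)_m, because G(t) is a matching and the error of U is a
   sum of M terms.  That edge is pulled in round t, so each prefix of its
   observation stream is charged at most once: |B| is at most the number of pairs
   (edge, n) whose first n observations have a mean that is delta/M away from mu.
   By Markov's inequality for the fourth centered moment (at most n^2/2 for
   Bernoulli sums), the n-th prefix is bad with probability at most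
   M^4/(2 n^2 delta^4); summing min(1, .) over n gives 1 + 2 M^2/delta^2 per edge,
   hence E|B| <= M K + 2 M^3 K/delta^2. *)

Definition seq_mean (R : realFieldType) (s : seq bool) : R :=
  if size s == 0%N then 0 else (count id s)%:R / (size s)%:R.
Arguments seq_mean {R}.

Section BernoulliExpectation.
Variables (R : realFieldType) (p : R).

Fixpoint Ebern (n : nat) (F : seq bool -> R) : R :=
  if n is n'.+1 then
    p * Ebern n' (fun s => F (true :: s)) + (1 - p) * Ebern n' (fun s => F (false :: s))
  else F [::].

Lemma Ebern_cst n c : Ebern n (fun _ => c) = c.
Proof. by elim: n => [|n IH] //=; rewrite IH; ring. Qed.

Lemma EbernD n F G : Ebern n (fun s => F s + G s) = Ebern n F + Ebern n G.
Proof.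
elim: n F G => [|n IH] F G //=.
by rewrite (IH (fun s => F (true :: s))) (IH (fun s => F (false :: s))); ring.
Qed.

Lemma EbernZ n c F : Ebern n (fun s => c * F s) = c * Ebern n F.
Proof.
elim: n F => [|n IH] F //=.
by rewrite (IH (fun s => F (true :: s))) (IH (fun s => F (false :: s))); ring.
Qed.

Lemma Ebern_sum n (I : Type) (r : seq I) (F : I -> seq bool -> R) :
  Ebern n (fun s => \sum_(i <- r) F i s) = \sum_(i <- r) Ebern n (F i).
Proof.
elim: r => [|i r IH]; first by under eq_fun do rewrite big_nil; rewrite Ebern_cst big_nil.
by under eq_fun do rewrite big_cons; rewrite EbernD IH big_cons.
Qed.

Hypothesis p01 : 0 <= p <= 1.

Lemma ler_Ebern n F G : (forall s, size s = n -> F s <= G s) -> Ebern n F <= Ebern n G.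
Proof.
have [p0 p1] : 0 <= p /\ 0 <= 1 - p by case/andP: p01; rewrite subr_ge0.
elim: n F G => [|n IH] F G FG /=; first exact: FG.
by rewrite lerD // ler_wpM2l // IH // => s sz; apply: FG; rewrite /= sz.
Qed.

Lemma Ebern_indicator_itv n (B : pred (seq bool)) :
  0 <= Ebern n (fun s => (nat_of_bool (B s))%:R) <= 1.
Proof.
apply/andP; split; [rewrite -[leLHS](Ebern_cst n 0) | rewrite -[leRHS](Ebern_cst n 1)].
  by apply: ler_Ebern => s _; case: (B s).
by apply: ler_Ebern => s _; case: (B s).
Qed.

Definition centered_sum (s : seq bool) : R := \sum_(c <- s) ((c : nat)%:R - p).

Lemma Ebern_centered_pow n k a :
  Ebern n (fun s => (a + centered_sum s) ^+ k)
  = \sum_(i < k.+1) (a ^+ (k - i) * Ebern n (fun s => centered_sum s ^+ i)) *+ 'C(k, i).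
Proof.
under eq_fun do rewrite exprDn.
rewrite Ebern_sum; apply: eq_bigr => i _.
by under eq_fun do rewrite -mulr_natl; rewrite EbernZ EbernZ mulr_natl.
Qed.

Definition centered_moment n k := Ebern n (fun s => centered_sum s ^+ k).

Lemma centered_momentS n k : centered_moment n.+1 k =
  \sum_(i < k.+1)
    ((p * (1 - p) ^+ (k - i) + (1 - p) * (- p) ^+ (k - i)) * centered_moment n i) *+ 'C(k, i).
Proof.
have shift c : (fun s => centered_sum (c :: s) ^+ k)
    = (fun s => ((c : nat)%:R - p + centered_sum s) ^+ k).
  by apply/funext => s; rewrite /centered_sum big_cons.
rewrite /centered_moment /= !shift !Ebern_centered_pow /= mulr1n sub0r !mulr_sumr -big_split.
by apply: eq_bigr => i _ /=; rewrite !mulrnAr -mulrnDl !mulrA -mulrDl.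
Qed.

Lemma centered_moment0 n : centered_moment n 0 = 1.
Proof. exact: Ebern_cst. Qed.

Lemma centered_moment1 n : centered_moment n 1 = 0.
Proof.
elim: n => [|n IH]; first by rewrite /centered_moment /= /centered_sum big_nil.
rewrite centered_momentS !big_ord_recl big_ord0 /= /bump !addnE !subnE /=.
by rewrite !(binS, bin0, bin0n) /= centered_moment0 IH; ring.
Qed.

Lemma centered_moment2 n : centered_moment n 2 = n%:R * (p * (1 - p)).
Proof.
elim: n => [|n IH]; first by rewrite /centered_moment /= /centered_sum big_nil; ring.
rewrite centered_momentS !big_ord_recl big_ord0 /= /bump !addnE !subnE /=.
rewrite !(binS, bin0, bin0n) /= centered_moment0 centered_moment1 IH -[n.+1]addn1 natrD; ring.
Qed.

Lemma centered_moment4 n : centered_moment n 4 =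
  n%:R * (p * (1 - p) * ((1 - p) ^+ 3 + p ^+ 3)) + 3 * n%:R * (n%:R - 1) * (p * (1 - p)) ^+ 2.
Proof.
elim: n => [|n IH]; first by rewrite /centered_moment /= /centered_sum big_nil; ring.
rewrite centered_momentS !big_ord_recl big_ord0 /= /bump !addnE !subnE /=.
rewrite !(binS, bin0, bin0n) /= centered_moment0 centered_moment1 centered_moment2 IH.
by rewrite -[n.+1]addn1 natrD; ring.
Qed.


Lemma centered_moment4_le n : centered_moment n 4 <= n%:R ^+ 2 / 2.
Proof.
have [p0 p1] : 0 <= p /\ p <= 1 by apply/andP.
have v0 : 0 <= p * (1 - p) by nra.
have v4 : p * (1 - p) <= 1 / 4 by have := sqr_ge0 (p - 1 / 2); rewrite expr2; nra.
have cube : (1 - p) ^+ 3 + p ^+ 3 = 1 - 3 * (p * (1 - p)) by ring.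
have xx : 0 <= n%:R * (n%:R - 1) :> R.
  by case: n => [|n]; rewrite ?mul0r // mulr_ge0 ?subr_ge0 ?ler1n.
rewrite centered_moment4 cube; set x := n%:R in xx *; set v := p * (1 - p) in v0 v4 *.
have x0 : 0 <= x by rewrite ler0n.
have t1 : x * (v * (1 - 3 * v)) <= x * (1 / 4) by apply: ler_wpM2l => //; nra.
have t2 : 3 * x * (x - 1) * v ^+ 2 <= 3 * x * (x - 1) * (1 / 16).
  by apply: ler_wpM2l; [rewrite -mulrA mulr_ge0 | rewrite expr2; nra].
nra.
Qed.

Lemma centered_sum_mean s : centered_sum s = (size s)%:R * (seq_mean s - p).
Proof.
have -> : centered_sum s = (count id s)%:R - (size s)%:R * p.
  elim: s => [|c s IH]; first by rewrite /centered_sum big_nil mul0r subr0.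
  by rewrite /centered_sum big_cons -/(centered_sum s) IH /= natrD -addn1 natrD; ring.
rewrite /seq_mean; case: eqP => [/size0nil -> /=|/eqP n0]; first by rewrite !mul0r subr0.
by rewrite mulrBr mulrCA divff ?mulr1 // pnatr_eq0.
Qed.

Lemma Ebern_mean_dev_le n eps : 0 < eps -> (0 < n)%N ->
  Ebern n (fun s => (nat_of_bool (eps <= `|seq_mean s - p|))%:R)
  <= (2 * n%:R ^+ 2 * eps ^+ 4)^-1.
Proof.
move=> eps0 n0; have npos : 0 < n%:R :> R by rewrite ltr0n.
have c0 : 0 < (n%:R * eps) ^+ 4 by rewrite exprn_gt0 ?mulr_gt0.
have fourth_pow_ge0 (x : R) : 0 <= x ^+ 4 by rewrite -[4%N]/(2 * 2)%N exprM sqr_ge0.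
have markov s : size s = n ->
    (nat_of_bool (eps <= `|seq_mean s - p|))%:R
    <= ((n%:R * eps) ^+ 4)^-1 * centered_sum s ^+ 4.
  move=> sz; rewrite mulrC ler_pdivlMr // centered_sum_mean sz.
  case: (boolP (eps <= _)) => dev; last by rewrite mul0r.
  rewrite mul1r -[X in _ <= X]ger0_norm // normrX normrM (ger0_norm (ltW npos)).
  by apply: lerXn2r; rewrite ?nnegrE ?mulr_ge0 ?ler_wpM2l // ltW.
apply: le_trans (ler_Ebern markov) _.
rewrite EbernZ; apply: le_trans (ler_wpM2l _ (centered_moment4_le n)) _.
  by rewrite invr_ge0 ltW.
suff -> : ((n%:R * eps) ^+ 4)^-1 * (n%:R ^+ 2 / 2) = (2 * n%:R ^+ 2 * eps ^+ 4)^-1 by [].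
by rewrite exprMn; field; rewrite !gt_eqF.
Qed.

End BernoulliExpectation.

Lemma inv_sq_le_telescope (R : realFieldType) n : (0 < n)%N ->
  (2 * n%:R ^+ 2 : R)^-1 <= n%:R^-1 - n.+1%:R^-1.
Proof.
move=> n0; have npos : 0 < n%:R :> R by rewrite ltr0n.
have -> : n%:R^-1 - n.+1%:R^-1 = (n%:R * n.+1%:R)^-1 :> R.
  by rewrite -addn1 natrD; field; rewrite !gt_eqF // addr_gt0.
rewrite lef_pV2 ?posrE ?mulr_gt0 // -[n.+1]addn1 natrD.
have : 1 <= n%:R :> R by rewrite ler1n.
nra.
Qed.

Lemma sum_inv_sq_tail_le (R : realFieldType) n0 N : (0 < n0)%N ->
  \sum_(n0 <= n < N) (2 * n%:R ^+ 2 : R)^-1 <= n0%:R^-1.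
Proof.
move=> n0_gt0; case: (leqP n0 N) => [n0N|Nn0]; last first.
  by rewrite big_geq ?(ltnW Nn0) // invr_ge0 ler0n.
apply: (@le_trans _ _ (\sum_(n0 <= n < N) - (n.+1%:R^-1 - n%:R^-1))).
  rewrite big_nat [X in _ <= X]big_nat; apply: ler_sum => n /andP[n0n _].
  by rewrite opprB inv_sq_le_telescope // (leq_trans n0_gt0).
by rewrite sumrN telescope_sumr // opprB lerBlDr lerDl invr_ge0 ler0n.
Qed.

Lemma sum_le_inv_sq_bounded (R : archiFieldType) (a : R) (q : nat -> R) : 0 < a ->
  (forall n, 0 <= q n <= 1) ->
  (forall n, (0 < n)%N -> q n <= a ^+ 2 / (2 * n%:R ^+ 2)) ->
  forall N, \sum_(0 <= n < N) q n <= 1 + 2 * a.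
Proof.
move=> a0 q01 q_le N; pose n0 := (Num.truncn a).+1.
have /andP[_ a_lt] := truncn_itv (ltW a0); rewrite -/n0 in a_lt.
have n0_le : n0%:R <= a + 1.
  by rewrite /n0 -addn1 natrD lerD2r; case/andP: (truncn_itv (ltW a0)).
have q0 n : 0 <= q n by case/andP: (q01 n).
apply: (@le_trans _ _ (\sum_(0 <= n < maxn N n0) q n)).
  rewrite (big_cat_nat (leq0n N) (leq_maxl N n0)) /= lerDl.
  by apply: sumr_ge0 => n _.
rewrite (big_cat_nat (leq0n n0) (leq_maxr N n0)) /=.
rewrite (_ : 1 + 2 * a = (a + 1) + a); last by ring.
apply: lerD.
  apply: le_trans n0_le; rewrite -[n0 in n0%:R]subn0 -sumr_const_nat.
  by apply: ler_sum => n _; case/andP: (q01 n).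
apply: (@le_trans _ _ (a ^+ 2 * \sum_(n0 <= n < maxn N n0) (2 * n%:R ^+ 2)^-1)).
  rewrite mulr_sumr big_nat [X in _ <= X]big_nat.
  by apply: ler_sum => n /andP[n0n _]; apply: q_le; exact: leq_trans n0n.
apply: le_trans (ler_wpM2l (sqr_ge0 a) (@sum_inv_sq_tail_le R n0 (maxn N n0) isT)) _.
by rewrite expr2 -mulrA ger_pMr // ler_pdivrMr ?ltr0n // mul1r ltW.
Qed.

Lemma leq_sum_add_at (I : finType) (f g : I -> nat) i0 c :
  (forall i, f i <= g i)%N -> (f i0 + c <= g i0)%N ->
  (\sum_i f i + c <= \sum_i g i)%N.
Proof.
move=> fg h; rewrite (bigD1 i0) // [X in (_ <= X)%N](bigD1 i0) //= addnAC.
by rewrite leq_add // leq_sum.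
Qed.

Lemma norm_sum_pigeonhole (R : realFieldType) n (F : 'I_n -> R) (e : R) :
  (0 < n)%N -> e <= `|\sum_i F i| -> exists i, e / n%:R <= `|F i|.
Proof.
move=> n0 e_le; apply/existsP; apply: contraLR e_le; rewrite negb_exists -ltNge.
move=> /forallP small; apply: le_lt_trans (ler_norm_sum _ _ _) _.
have -> : e = \sum_(i < n) e / n%:R.
  by rewrite sumr_const card_ord -[_ *+ n]mulr_natr divfK // pnatr_eq0 -lt0n.
apply: ltr_sum => [|i _]; last by rewrite ltNge small.
by apply/hasP; exists (Ordinal n0); rewrite ?mem_index_enum.
Qed.

Lemma U_injective (R : realType) M K (G : assignment M K) (w : 'I_M -> 'I_K -> R) :
  injective G -> U G w = \sum_(m < M) w m (G m).
Proof.
move=> G_inj; apply: eq_bigr => m _.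
case: forallP => // -[] m'; apply/implyP => m'm; apply: contra m'm => /eqP Gm'.
by apply/eqP; exact: G_inj.
Qed.

Section RealizedRun.
Variables (R : realType) (M K : nat) (mu : 'I_M -> 'I_K -> R) (delta : R).
Variables (gp : bool) (hung : ('I_M -> 'I_K -> R) -> assignment M K)
  (sel : ('I_M -> 'I_K -> nat) -> assignment M K -> 'I_M).
Variables (X : 'I_M -> 'I_K -> nat -> bool) (coin : nat -> bool) (unif : nat -> 'I_K).

Definition first_obs m k n := [seq X m k j | j <- iota 0 n].

Definition bad_prefix (eps : R) m k n : bool :=
  eps <= `|seq_mean (first_obs m k n) - mu m k|.

Definition bad_prefix_count (eps : R) (N : 'I_M -> 'I_K -> nat) : nat :=
  (\sum_(m < M) \sum_(k < K) \sum_(0 <= n < N m k) bad_prefix eps m k n)%N.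

Local Notation run := (state_before gp hung sel X coin unif).

Lemma count_first_obs_addb m k n (b : bool) :
  count id (first_obs m k (n + b)) = (count id (first_obs m k n) + (b && X m k n))%N.
Proof. by rewrite /first_obs iotaD map_cat count_cat; case: b => //=; rewrite addn0. Qed.

Lemma state_sums_count n m k :
  (run n).2 m k = count id (first_obs m k ((run n).1 m k)).
Proof.
elim: n => [|n IH] //=.
by rewrite IH !count_first_obs_addb andbA.
Qed.

Lemma muhat_state n m k :
  muhat R (run n).1 (run n).2 m k
  = seq_mean (first_obs m k ((run n).1 m k)).
Proof. by rewrite /muhat /seq_mean state_sums_count size_map size_iota. Qed.

Lemma leq_sum_bad_prefix (eps : R) m k a b : (a <= b)%N ->
  (\sum_(0 <= n < a) bad_prefix eps m k n <= \sum_(0 <= n < b) bad_prefix eps m k n)%N.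
Proof. by move=> ab; rewrite (big_cat_nat (leq0n a) ab) /= leq_addr. Qed.

Lemma bad_prefix_count_mono eps (N N' : 'I_M -> 'I_K -> nat) :
  (forall m k, N m k <= N' m k)%N -> (bad_prefix_count eps N <= bad_prefix_count eps N')%N.
Proof.
by move=> NN'; apply: leq_sum => m _; apply: leq_sum => k _; exact: leq_sum_bad_prefix.
Qed.

Hypothesis M_gt0 : (0 < M)%N.
Hypothesis hung_spec : hungarian_spec hung.

Lemma bad_prefix_count_step n :
  (bad_prefix_count (delta / M%:R) (run n).1
     + inB mu delta gp hung sel X coin unif n.+1
   <= bad_prefix_count (delta / M%:R) (run n.+1).1)%N.
Proof.
set N := (run n).1; set N' := (run n.+1).1.
have N_le m k : (N m k <= N' m k)%N by rewrite /N' /= -addnA leq_addr.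
rewrite /inB /state_at /=; set mh := muhat _ _ _; set G := hung mh.
case: (boolP (delta <= _)) => inB_t; last by rewrite addn0; exact: bad_prefix_count_mono.
have [/injectiveP G_inj _] := hung_spec mh.
have [m0 dev] : exists m, delta / M%:R <= `|mh m (G m) - mu m (G m)|.
  by apply: norm_sum_pigeonhole; rewrite // sumrB -!U_injective.
rewrite /bad_prefix_count; apply: (leq_sum_add_at (i0 := m0)).
  by move=> m; apply: leq_sum => k _; exact: leq_sum_bad_prefix.
apply: (leq_sum_add_at (i0 := G m0)) => [k|]; first exact: leq_sum_bad_prefix.
have pulled : (N m0 (G m0) < N' m0 (G m0))%N by rewrite /N' /= eqxx addn1 ltnS leq_addr.
apply: leq_trans (leq_sum_bad_prefix _ _ _ pulled).
by rewrite big_nat_recr //= leq_add2l /bad_prefix -muhat_state dev.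
Qed.

Lemma sum_inB_le_bad_prefix_count T :
  (\sum_(1 <= t < T.+1) inB mu delta gp hung sel X coin unif t
   <= bad_prefix_count (delta / M%:R) (run T).1)%N.
Proof.
elim: T => [|T IH]; first by rewrite big_geq.
by rewrite big_nat_recr //= (leq_trans _ (bad_prefix_count_step T)) // leq_add2r.
Qed.

Lemma cardB_le_bad_prefixes :
  (cardB mu delta gp hung sel X coin unif
   <= \sum_(m < M) \sum_(k < K) \sum_(n <oo) ((bad_prefix (delta / M%:R) m k n)%:R : R)%:E)%E.
Proof.
rewrite /cardB; apply: lime_le.
  by apply: is_cvg_nneseries => t _ _; rewrite lee_fin ler0n.
apply: nearW => -[|T].
  rewrite big_geq // sume_ge0 // => m _; rewrite sume_ge0 // => k _.
  by apply: nneseries_ge0 => n _ _; rewrite lee_fin ler0n.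
rewrite sumEFin -natr_sum.
apply: le_trans (_ : ((bad_prefix_count (delta / M%:R) (run T).1)%:R)%:E <= _)%E.
  by rewrite lee_fin ler_nat sum_inB_le_bad_prefix_count.
rewrite /bad_prefix_count natr_sum -sumEFin; apply: lee_sum => m _.
rewrite natr_sum -sumEFin; apply: lee_sum => k _.
rewrite natr_sum -sumEFin.
by apply: nneseries_lim_ge => n _ _; rewrite lee_fin ler0n.
Qed.

End RealizedRun.

Section ObservationLaw.
Local Open Scope classical_set_scope.
Variables (R : realType) (M K : nat) (mu : 'I_M -> 'I_K -> R).
Variables (d : measure_display) (T : measurableType d) (P : probability T R).
Variables (X : 'I_M -> 'I_K -> nat -> T -> bool) (coin : nat -> T -> bool)
  (unif : nat -> T -> 'I_K).
Hypothesis law : randomness_law P mu X coin unif.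
Variables (m : 'I_M) (k : 'I_K).

Definition bern_weight (b : bool) : R := if b then mu m k else 1 - mu m k.

Definition cylinder (s : seq nat) (b : nat -> bool) : set T :=
  [set w | all (fun j => X m k j w == b j) s].

Lemma cylinder_nil b : cylinder [::] b = setT.
Proof. by apply/seteqP; split. Qed.

Lemma measurable_cylinder s b : measurable (cylinder s b).
Proof.
case: law => mX _ _ _; elim: s => [|j s IH]; first by rewrite cylinder_nil.
rewrite (_ : cylinder _ _ = [set w | X m k j w = b j] `&` cylinder s b).
  exact: measurableI.
apply/seteqP; split => w; rewrite /cylinder /=; first by case/andP => /eqP.
by case=> /eqP -> ->.
Qed.

Lemma prob_cylinder s b : uniq s ->
  P (cylinder s b) = (\prod_(j <- s) bern_weight (b j))%:E.
Proof.
case: law => _ _ _ joint s_uniq.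
have := joint [seq (m, k, j) | j <- s] [::] [::] (fun e => b e.2) xpredT (fun _ => k).
rewrite big_map /= expr0 !mulr1 => <- //; last by rewrite map_inj_uniq // => ? ? [].
by congr (P _); apply/seteqP; split => w /=; rewrite all_map andbT.
Qed.

Definition window_event (s : seq nat) (b : nat -> bool) a n (G : seq bool -> bool) : set T :=
  cylinder s b `&` [set w | G [seq X m k j w | j <- iota a n]].

Lemma window_event_law n : forall s b a G, uniq s -> all (fun j => (j < a)%N) s ->
  measurable (window_event s b a n G) /\
  P (window_event s b a n G)
  = ((\prod_(j <- s) bern_weight (b j)) * Ebern (mu m k) n (fun x => (G x)%:R))%:E.
Proof.
elim: n => [|n IH] s b a G s_uniq s_lt.
  rewrite /window_event /=; case: (G [::]).
    rewrite (_ : [set _ | true] = setT); last by apply/seteqP; split.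
    by rewrite setIT prob_cylinder // mulr1; split => //; exact: measurable_cylinder.
  rewrite (_ : [set _ | false] = set0); last by apply/seteqP; split.
  by rewrite setI0 measure0 mulr0.
pose b' (c : bool) j := if j == a then c else b j.
have a_notin : a \notin s.
  by apply: contraTN s_lt => a_in; apply/allPn; exists a; rewrite ?ltnn.
have as_uniq : uniq (a :: s) by rewrite /= a_notin.
have as_lt : all (fun j => (j < a.+1)%N) (a :: s).
  by rewrite /= ltnSn; apply: sub_all s_lt => j /ltnW.
have b'_s c : {in s, b' c =1 b}.
  by move=> j j_in; rewrite /b' ifN // neq_ltn (allP s_lt j j_in).
have [mT PT] := IH (a :: s) (b' true) a.+1 (fun x => G (true :: x)) as_uniq as_lt.
have [mF PF] := IH (a :: s) (b' false) a.+1 (fun x => G (false :: x)) as_uniq as_lt.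
have cyl_b' c w : all (fun j => X m k j w == b' c j) s = all (fun j => X m k j w == b j) s.
  by apply: eq_in_all => j /b'_s ->.
have -> : window_event s b a n.+1 G =
    window_event (a :: s) (b' true) a.+1 n (fun x => G (true :: x))
    `|` window_event (a :: s) (b' false) a.+1 n (fun x => G (false :: x)).
  apply/seteqP; split => w; rewrite /window_event /cylinder /= !cyl_b' /b' eqxx.
    by case: (X m k a w) => -[cyl Gw]; [left|right].
  by case=> -[/andP[/eqP -> cyl] Gw].
have disj : window_event (a :: s) (b' true) a.+1 n (fun x => G (true :: x))
    `&` window_event (a :: s) (b' false) a.+1 n (fun x => G (false :: x)) = set0.
  apply/seteqP; split => w //; rewrite /window_event /cylinder /= /b' eqxx.
  by case=> -[/andP[/eqP -> _] _] [].
split; first exact: measurableU.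
rewrite measureU //; apply: eq_trans (congr2 (fun x y => x + y)%E PT PF) _.
have prod_b' c : \prod_(j <- s) bern_weight (b' c j) = \prod_(j <- s) bern_weight (b j).
  by apply: eq_big_seq => j /b'_s ->.
by rewrite -EFinD !big_cons !prod_b' /b' eqxx /=; congr (_%:E); ring.
Qed.

Lemma prob_first_obs n (G : seq bool -> bool) :
  measurable [set w | G (first_obs (fun m k j => X m k j w) m k n)] /\
  P [set w | G (first_obs (fun m k j => X m k j w) m k n)]
  = (Ebern (mu m k) n (fun x => (G x)%:R))%:E.
Proof.
have := @window_event_law n [::] xpredT 0 G isT isT.
by rewrite /window_event cylinder_nil setTI big_nil mul1r.
Qed.

Local Notation bad_obs eps n w :=
  (bad_prefix mu (fun m k j => X m k j w) eps m k n).

Lemma bad_obs_indicE eps n :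
  (fun w => ((bad_obs eps n w)%:R : R)%:E) = (fun w => (\1_[set w | bad_obs eps n w] w)%:E).
Proof.
apply/funext => w; rewrite indicE.
case: (boolP (bad_obs eps n w)) => bad; first by rewrite mem_set.
by rewrite memNset //=; apply/negP.
Qed.

Lemma measurable_bad_obs eps n :
  measurable_fun [set: T] (fun w => ((bad_obs eps n w)%:R : R)%:E).
Proof.
rewrite bad_obs_indicE; apply/measurable_EFinP; apply: measurable_indic.
exact: (prob_first_obs n (fun x => eps <= `|seq_mean x - mu m k|)).1.
Qed.

Lemma integral_bad_obs eps n :
  (\int[P]_w ((bad_obs eps n w)%:R : R)%:E
   = (Ebern (mu m k) n (fun x => (nat_of_bool (eps <= `|seq_mean x - mu m k|))%:R))%:E)%E.
Proof.
have [mE PE] := prob_first_obs n (fun x => eps <= `|seq_mean x - mu m k|).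
by rewrite bad_obs_indicE integral_indic // setIT.
Qed.

Lemma expected_bad_obs_le eps : 0 < eps -> 0 <= mu m k <= 1 ->
  (\int[P]_w \sum_(n <oo) ((bad_obs eps n w)%:R : R)%:E <= (1 + 2 * (eps ^+ 2)^-1)%:E)%E.
Proof.
move=> eps0 mu01; rewrite integral_nneseries //; last exact: measurable_bad_obs.
under eq_eseriesr do rewrite integral_bad_obs.
have prob_itv n := Ebern_indicator_itv mu01 n (fun x => eps <= `|seq_mean x - mu m k|).
apply: lime_le.
  by apply: is_cvg_nneseries => n _ _; rewrite lee_fin; case/andP: (prob_itv n).
apply: nearW => N; rewrite sumEFin lee_fin.
apply: sum_le_inv_sq_bounded => [|n|n n0]; first by rewrite invr_gt0 exprn_gt0.
  exact: prob_itv.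
apply: le_trans (Ebern_mean_dev_le mu01 eps0 n0) _.
by rewrite exprVn -exprM -invfM [_ * (2 * _)]mulrC.
Qed.

End ObservationLaw.

(* No measurability needed: a nonnegative integral is a supremum over simple minorants. *)
Lemma ge0_le_integralT (R : realType) (d : measure_display) (T : measurableType d)
  (mu : {measure set T -> \bar R}) (f g : T -> \bar R) :
  (forall x, 0 <= f x)%E -> (forall x, f x <= g x)%E ->
  (\int[mu]_x f x <= \int[mu]_x g x)%E.
Proof.
move=> f0 fg; have g0 x : (0 <= g x)%E by exact: le_trans (f0 x) (fg x).
rewrite !ge0_integralTE //; apply: le_ereal_sup => _ /= [h hf <-].
by exists h => //= x; exact: le_trans (hf x) (fg x).
Qed.

Theorem lemma4 (R : realType) (M K : nat) (mu : 'I_M -> 'I_K -> R) (delta : R)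
  (d : measure_display) (T : measurableType d) (P : probability T R)
  (X : 'I_M -> 'I_K -> nat -> T -> bool) (coin : nat -> T -> bool)
  (unif : nat -> T -> 'I_K)
  (hung : ('I_M -> 'I_K -> R) -> {ffun 'I_M -> 'I_K})
  (sel : ('I_M -> 'I_K -> nat) -> {ffun 'I_M -> 'I_K} -> 'I_M)
  (gp : bool) :
  (0 < M)%N -> (M < K)%N ->
  (forall m k, 0 <= mu m k <= 1) ->
  unique_optimum mu ->
  0 < delta ->
  hungarian_spec hung ->
  sel_spec sel ->
  randomness_law P mu X coin unif ->
  (\int[P]_w cardB mu delta gp hung sel (fun m k j => X m k j w)
                   (fun t => coin t w) (fun t => unif t w)
   <= (4 * M * K)%:R%:E + (2 * M%:R ^+ 3 * K%:R / delta ^+ 2)%:E)%E.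
Proof.
move=> M_gt0 _ mu01 _ delta_gt0 hung_spec _ law.
have M_pos : 0 < M%:R :> R by rewrite ltr0n.
set eps := delta / M%:R; have eps_gt0 : 0 < eps by rewrite divr_gt0.
pose bad w m k n := ((bad_prefix mu (fun m k j => X m k j w) eps m k n)%:R : R)%:E.
have bad_ge0 w m k n : (0 <= bad w m k n)%E by rewrite lee_fin ler0n.
apply: (@le_trans _ _ (\int[P]_w \sum_(m < M) \sum_(k < K) \sum_(n <oo) bad w m k n)%E).
  apply: ge0_le_integralT => w; last exact: cardB_le_bad_prefixes.
  by apply: nneseries_ge0 => t _ _; rewrite lee_fin ler0n.
have mbad m k : measurable_fun [set: T] (fun w => \sum_(n <oo) bad w m k n)%E.
  by apply: ge0_emeasurable_sum => // n _; exact: (measurable_bad_obs law).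
rewrite (@ge0_integral_sum _ _ _ P _ measurableT _
    (fun m w => \sum_(k < K) \sum_(n <oo) bad w m k n)%E); first last.
- by move=> m w _; apply: sume_ge0 => k _; apply: nneseries_ge0 => n _ _; rewrite lee_fin.
- by move=> m; apply: emeasurable_sum => k; exact: mbad.
apply: (@le_trans _ _ (\sum_(m < M) \sum_(k < K) (1 + 2 * (eps ^+ 2)^-1)%:E)).
  apply: lee_sum => m _.
  rewrite (@ge0_integral_sum _ _ _ P _ measurableT _ (fun k w => \sum_(n <oo) bad w m k n)%E);
    [|exact: mbad|by move=> k w _; exact: nneseries_ge0].
  by apply: lee_sum => k _; exact: (expected_bad_obs_le law).
rewrite !sumEFin -EFinD lee_fin !sumr_const !card_ord -[_ *+ K]mulr_natr -[_ *+ M]mulr_natr.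
have -> : (1 + 2 * (eps ^+ 2)^-1) * K%:R * M%:R
    = (M * K)%:R + 2 * M%:R ^+ 3 * K%:R / delta ^+ 2 :> R.
  by rewrite /eps natrM; field; rewrite !gt_eqF.
by rewrite lerD2r ler_nat -mulnA leq_pmull.
Qed.
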